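(* For the iterates of the Jacobi scheme described in the context, for all $k\ge0$, $$\lambda^k=-\theta z^k-\tau_z\Delta z^k.$$
   Context: Data: $A_t\in\mathbb{R}^{m\times n_t}$, $X_t\subseteq\mathbb{R}^{n_t}$, $f_t:\mathbb{R}^{n_t}\to\mathbb{R}$ ($t\in[T]$), $b\in\mathbb{R}^m$, $Ax=\sum_tA_tx_t$, $A_{\neq t}x_{\neq t}=\sum_{s\neq t}A_sx_s$, $\|w\|_M=\sqrt{w^\top Mw}$. Jacobi scheme: given $x^0\in X_1\times\cdots\times X_T$, $z^0,\lambda^0\in\mathbb{R}^m$, $\rho,\theta,\tau_x,\tau_z>0$, for $k\ge1$: (i) each $x_t^k$ is a local minimizer of $\min_{x_t\in X_t}f_t(x_t)+(\lambda^{k-1})^\top A_tx_t+\frac{\rho}{2}\|A_tx_t+A_{\neq t}x^{k-1}_{\neq t}+z^{k-1}-b\|^2+\frac{\tau_x}{2}\|x_t-x_t^{k-1}\|^2_{A_t^\top A_t}$; (ii) $z^k=(\tau_zz^{k-1}-\rho(Ax^k-b)-\lambda^{k-1})/(\tau_z+\rho+\theta)$; (iii) $\lambda^k=\lambda^{k-1}+\rho(Ax^k+z^k-b)$. For $k\ge1$, $\Delta z^k=z^k-z^{k-1}$, and $\Delta z^0:=-\tau_z^{-1}(\lambda^0+\theta z^0)$. *)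

From mathcomp Require Import all_boot all_order all_algebra.
From mathcomp Require Import reals.
Set Implicit Arguments. Unset Strict Implicit. Unset Printing Implicit Defensive.
Import Order.TTheory GRing.Theory Num.Theory.
Local Open Scope ring_scope.

Definition sqnorm (R : realType) (p : nat) (w : 'cV[R]_p) : R := (w^T *m w) 0 0.

Definition sqMnorm (R : realType) (p : nat) (M : 'M[R]_p) (w : 'cV[R]_p) : R :=
  (w^T *m M *m w) 0 0.

Definition local_minimizer (R : realType) (p : nat) (S : 'cV[R]_p -> Prop)
  (g : 'cV[R]_p -> R) (x : 'cV[R]_p) : Prop :=
  S x /\ exists eps : R, 0 < eps /\
    forall y, S y -> sqnorm (y - x) < eps ^+ 2 -> g x <= g y.

Definition Aop (R : realType) (m T : nat) (n : 'I_T -> nat)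
  (A : forall t : 'I_T, 'M[R]_(m, n t)) (x : forall t : 'I_T, 'cV[R]_(n t)) : 'cV[R]_m :=
  \sum_(t < T) A t *m x t.

Definition Aop_neq (R : realType) (m T : nat) (n : 'I_T -> nat)
  (A : forall t : 'I_T, 'M[R]_(m, n t)) (x : forall t : 'I_T, 'cV[R]_(n t))
  (t : 'I_T) : 'cV[R]_m :=
  \sum_(s < T | s != t) A s *m x s.

Definition subproblem (R : realType) (m T : nat) (n : 'I_T -> nat)
  (A : forall t : 'I_T, 'M[R]_(m, n t)) (f : forall t : 'I_T, 'cV[R]_(n t) -> R)
  (b : 'cV[R]_m) (rho tau_x : R) (xprev : forall t : 'I_T, 'cV[R]_(n t))
  (zprev lamprev : 'cV[R]_m) (t : 'I_T) (xt : 'cV[R]_(n t)) : R :=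
  f t xt + (lamprev^T *m (A t *m xt)) 0 0
  + rho / 2 * sqnorm (A t *m xt + Aop_neq A xprev t + zprev - b)
  + tau_x / 2 * sqMnorm ((A t)^T *m A t) (xt - xprev t).

Definition deltaz (R : realType) (m : nat) (z lam : nat -> 'cV[R]_m) (theta tau_z : R)
  (k : nat) : 'cV[R]_m :=
  if k is k'.+1 then z k'.+1 - z k' else - (tau_z^-1 *: (lam 0%N + theta *: z 0%N)).

Arguments subproblem {R m T n} A f b rho tau_x xprev zprev lamprev t xt.
Arguments Aop_neq {R m T n} A x t.

From mathcomp Require Import all_boot all_order all_algebra.
From mathcomp Require Import reals.
Import Order.TTheory GRing.Theory Num.Theory.
Local Open Scope ring_scope.

(* The z-update says (tau + rho + theta) z' = tau z - rho r - lam, i.e.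
   lam + rho z' = tau (z - z') - theta z' - rho r; adding rho r, the residual
   term of the multiplier update cancels. *)

Section MultiplierIdentity.

Variables (F : fieldType) (V : lmodType F) (tau rho theta : F).

Lemma multiplier_update_eq (z z' lam r : V) :
  tau + rho + theta != 0 ->
  z' = (tau + rho + theta)^-1 *: (tau *: z - rho *: r - lam) ->
  lam + rho *: (r + z') = - (theta *: z') - tau *: (z' - z).
Proof.
move=> nz_c def_z'.
have scaled_z' : (tau + rho + theta) *: z' = tau *: z - rho *: r - lam.
  by rewrite def_z' scalerA mulfV // scale1r.
have -> : lam = tau *: z - rho *: r - (tau + rho + theta) *: z'.
  by rewrite scaled_z' opprB addrC subrK.
rewrite !scalerDl scalerDr scalerBr opprB !opprD.
by rewrite addrACA subrK [_ - theta *: z' + _]addrAC subrK addrA addrC.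
Qed.

Lemma multiplier_init_eq (z lam : V) :
  tau != 0 -> lam = - (theta *: z) - tau *: - (tau^-1 *: (lam + theta *: z)).
Proof. by move=> nz_tau; rewrite scalerN opprK scalerA mulfV // scale1r addrC addrK. Qed.

End MultiplierIdentity.

Theorem lemma1 (R : realType) (m T : nat) (n : 'I_T -> nat)
  (A : forall t : 'I_T, 'M[R]_(m, n t)) (X : forall t : 'I_T, 'cV[R]_(n t) -> Prop)
  (f : forall t : 'I_T, 'cV[R]_(n t) -> R) (b : 'cV[R]_m)
  (rho theta tau_x tau_z : R)
  (x : nat -> forall t : 'I_T, 'cV[R]_(n t)) (z lam : nat -> 'cV[R]_m) :
  0 < rho -> 0 < theta -> 0 < tau_x -> 0 < tau_z ->
  (forall t : 'I_T, X t (x 0%N t)) ->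
  (forall k : nat, (1 <= k)%N -> forall t : 'I_T,
     local_minimizer (X t)
       (subproblem A f b rho tau_x (x k.-1) (z k.-1) (lam k.-1) t) (x k t)) ->
  (forall k : nat, (1 <= k)%N ->
     z k = (tau_z + rho + theta)^-1 *:
             (tau_z *: z k.-1 - rho *: (Aop A (x k) - b) - lam k.-1)) ->
  (forall k : nat, (1 <= k)%N ->
     lam k = lam k.-1 + rho *: (Aop A (x k) + z k - b)) ->
  forall k : nat, lam k = - (theta *: z k) - tau_z *: deltaz z lam theta tau_z k.
Proof.
move=> rho_gt0 theta_gt0 _ tau_z_gt0 _ _ z_step lam_step [|k].
  exact/multiplier_init_eq/lt0r_neq0.
rewrite /deltaz lam_step // [_ + z _ - b]addrAC.
apply: multiplier_update_eq (z_step _ _) => //.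
by rewrite lt0r_neq0 // !addr_gt0.
Qed.
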